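(* Let $2\le m\le n$. If $u$ and $v$ are incomparable elements of the poset $(P_n\times P_2^m,\trianglelefteq)$, then $d_{H_{n,m}}(u,v)\le1+\binom{m}{2}$.
   Context: $P_k=\{0,\dots,k-1\}$, so $P_n\times P_2^m$ is the set of integer tuples $(v_0,\dots,v_m)$ with $0\le v_0\le n-1$ and $v_1,\dots,v_m\in\{0,1\}$. The dominance order $\trianglelefteq$ on $\mathbb{Z}^{m+1}$ is given by $(v_0,\dots,v_m)\trianglelefteq(u_0,\dots,u_m)$ iff $\sum_{j=0}^{i}v_j\le\sum_{j=0}^{i}u_j$ for every $0\le i\le m$; $P_n\times P_2^m$ carries the induced order. $H_{n,m}$ is the (undirected) Hasse diagram of $(P_n\times P_2^m,\trianglelefteq)$: $x,y$ are adjacent iff one covers the other. *)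

From mathcomp Require Import all_boot all_order.
Set Implicit Arguments. Unset Strict Implicit. Unset Printing Implicit Defensive.

(* Elements of P_n x P_2^m: a pair (v0, b) with v0 : 'I_n (0 <= v0 <= n-1)
   and b : {ffun 'I_m -> bool}, where v_(j+1) = b j (as 0/1). *)
Definition elt (n m : nat) := ('I_n * {ffun 'I_m -> bool})%type.

Definition psum (n m : nat) (x : elt n m) (i : 'I_m.+1) : nat :=
  x.1 + \sum_(j < m | j < i) nat_of_bool (x.2 j).

Definition dom (n m : nat) (x y : elt n m) : bool :=
  [forall i : 'I_m.+1, psum x i <= psum y i].

Definition covers (n m : nat) (x y : elt n m) : bool :=
  [&& dom x y, x != y &
      ~~ [exists z : elt n m, [&& z != x, z != y, dom x z & dom z y]]].

Definition hadj (n m : nat) : rel (elt n m) :=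
  fun x y => covers x y || covers y x.

Definition hdist_le (n m : nat) (u v : elt n m) (k : nat) : Prop :=
  exists p : seq (elt n m), [/\ path (@hadj n m) u p, last u p = v & size p <= k].

Definition incomparable (n m : nat) (u v : elt n m) : bool :=
  ~~ dom u v && ~~ dom v u.

From mathcomp Require Import all_boot all_order zify.
Set Implicit Arguments. Unset Strict Implicit. Unset Printing Implicit Defensive.

(* Identify x with its partial-sum sequence s_x(0..m), which moves by 0 or 1
   at each step; x ⊴ y iff s_x <= s_y pointwise.  If u and v are incomparable,
   s_u - s_v changes sign, so s_u(z) = s_v(z) for some 0 < z < m, whence
   |s_u(i) - s_v(i)| <= |i - z|.  The pointwise minimum of s_u and s_v is the
   sequence of an element w below both, and as the rank sum_i s_x(i) increases
   strictly along ⊴, saturated chains from w up to u and to v have total length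
   sum_i |s_u(i) - s_v(i)| <= sum_i |i - z| = C(z+1,2) + C(m-z+1,2) <= 1 + C(m,2). *)

Section RankedCoverPaths.
Variables (T : finType) (le : rel T) (rank : T -> nat).
Hypothesis le_refl : reflexive le.
Hypothesis le_trans : transitive le.
Hypothesis rank_lt : forall x y, le x y -> x != y -> rank x < rank y.

Definition coverb x y :=
  [&& le x y, x != y & ~~ [exists z, [&& z != x, z != y, le x z & le z y]]].

(* Take z of minimal rank strictly above x and below y. *)
Lemma exists_cover_le x y : le x y -> x != y -> exists2 z, coverb x z & le z y.
Proof.
move=> lexy nexy; pose between z := [&& z != x, le x z & le z y].
have between_y : between y by rewrite /between eq_sym nexy lexy le_refl.
case: (arg_minnP rank between_y) => z /and3P [nezx lexz lezy] zmin.
exists z => //; rewrite /coverb lexz eq_sym nezx /=.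
apply/existsP => -[z' /and4P [nez'x nez'z lexz' lez'z]].
have := zmin z'; rewrite /between nez'x lexz' (le_trans lez'z lezy) => /(_ isT).
by rewrite leqNgt rank_lt.
Qed.

Lemma cover_path x y : le x y ->
  exists p, [/\ path coverb x p, last x p = y & size p <= rank y - rank x].
Proof.
have [k] := ubnP (rank y - rank x); elim: k x => // k IH x ltk lexy.
have [<-|nexy] := eqVneq x y; first by exists [::].
have [z covxz lezy] := exists_cover_le lexy nexy.
have /and3P [lexz nexz _] := covxz.
have ltxz := rank_lt lexz nexz.
have le_rank_zy : rank z <= rank y.
  by have [->//|nezy] := eqVneq z y; exact/ltnW/rank_lt.
have [|p [walk lastp sizep]] := IH z _ lezy; first lia.
by exists (z :: p); split => /=; [rewrite covxz | | lia].
Qed.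

End RankedCoverPaths.

Section HasseWalks.
Variables n m : nat.
Implicit Types x y z : elt n m.

Lemma hadj_sym : symmetric (@hadj n m).
Proof. by move=> x y; rewrite /hadj orbC. Qed.

Lemma hdist_leW x y a b : hdist_le x y a -> a <= b -> hdist_le x y b.
Proof.
by case=> p [walk lastp sizep] leab; exists p; split; last exact: leq_trans leab.
Qed.

Lemma hdist_le_sym x y k : hdist_le x y k -> hdist_le y x k.
Proof.
case=> p [walk <- sizep]; exists (rev (belast x p)); split.
- by rewrite rev_path; apply: sub_path walk => a b; rewrite hadj_sym.
- by rewrite -(last_cons x) -rev_rcons -lastI rev_cons last_rcons.
- by rewrite size_rev size_belast.
Qed.

Lemma hdist_le_trans x y z a b :
  hdist_le x y a -> hdist_le y z b -> hdist_le x z (a + b).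
Proof.
case=> p [walkp <- sizep] [q [walkq <- sizeq]].
exists (p ++ q); split; first by rewrite cat_path walkp.
  by rewrite last_cat.
by rewrite size_cat leq_add.
Qed.

End HasseWalks.

Section PartialSums.
Variables n m : nat.
Implicit Types x y u v : elt n m.

Definition psumn x k := x.1 + \sum_(j < m | j < k) nat_of_bool (x.2 j).

Definition bitn x k := \sum_(j < m | j == k :> nat) nat_of_bool (x.2 j).

Lemma psum_psumn x (i : 'I_m.+1) : psum x i = psumn x i.
Proof. by []. Qed.

Lemma psumn0 x : psumn x 0 = x.1.
Proof. by rewrite /psumn big_pred0 ?addn0. Qed.

Lemma psumnS x k : psumn x k.+1 = psumn x k + bitn x k.
Proof.
rewrite /psumn /bitn -addnA (bigID (fun j : 'I_m => j < k)) /=.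
congr (_ + (_ + _)); apply: eq_bigl => j; rewrite ltnS.
  by case: ltngtP.
by rewrite -ltnNge ltnS eqn_leq.
Qed.

Lemma bitn_ord x (j : 'I_m) : bitn x j = x.2 j.
Proof. by rewrite /bitn (big_pred1 j). Qed.

Lemma bitn_out x k : m <= k -> bitn x k = 0.
Proof.
move=> lemk; rewrite /bitn big_pred0 // => j.
by apply/negbTE; rewrite neq_ltn (leq_trans (ltn_ord j) lemk).
Qed.

Lemma bitn_le1 x k : bitn x k <= 1.
Proof.
have [ltkm|/bitn_out->//] := ltnP k m.
by rewrite -[k]/(val (Ordinal ltkm)) bitn_ord leq_b1.
Qed.

Lemma psumn_step x k : psumn x k <= psumn x k.+1 <= (psumn x k).+1.
Proof. by rewrite psumnS leq_addr -addn1 leq_add2l bitn_le1. Qed.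

Lemma psumn_lipschitz x i j : i <= j -> psumn x i <= psumn x j <= psumn x i + (j - i).
Proof.
move/subnK <-; rewrite addnK; elim: (j - i) => [|d IH]; first by rewrite addn0 leqnn.
by have := psumn_step x (d + i); rewrite addSn; lia.
Qed.

Lemma psumn_out x k : m <= k -> psumn x k = psumn x m.
Proof.
move/subnK <-; elim: (k - m) => // d IH.
by rewrite addSn psumnS IH bitn_out ?addn0 // leq_addl.
Qed.

Lemma dom_psumn x y : dom x y -> forall k, psumn x k <= psumn y k.
Proof.
move/forallP=> le_xy k; have [lekm|ltmk] := leqP k m.
  exact: (le_xy (Ordinal (lekm : k < m.+1))).
by rewrite !(psumn_out _ (ltnW ltmk)); exact: (le_xy ord_max).
Qed.

Lemma ndom_psumn x y : ~~ dom x y -> exists2 i, i <= m & psumn y i < psumn x i.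
Proof. by case/forallPn=> i; rewrite -ltnNge; exists i; first exact: ltn_ord i. Qed.

Lemma psumn_inj x y : (forall k, k <= m -> psumn x k = psumn y k) -> x = y.
Proof.
case: x y => [x1 x2] [y1 y2] eq_xy; congr (_, _).
  by apply: val_inj; have := eq_xy 0 (leq0n _); rewrite !psumn0.
apply/ffunP => j; have := eq_xy j.+1 (ltn_ord j).
rewrite !psumnS eq_xy 1?ltnW // => /addnI; rewrite !bitn_ord.
by case: (x2 j); case: (y2 j).
Qed.

Lemma dom_refl : reflexive (@dom n m).
Proof. by move=> x; apply/forallP. Qed.

Lemma dom_trans : transitive (@dom n m).
Proof.
move=> y x z /forallP le_xy /forallP le_yz.
by apply/forallP => i; exact: leq_trans (le_xy i) (le_yz i).
Qed.

Definition rank x := \sum_(i < m.+1) psumn x i.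

Lemma rank_lt x y : dom x y -> x != y -> rank x < rank y.
Proof.
move=> le_xy nexy.
have [i ltxy] : exists i : 'I_m.+1, psumn x i < psumn y i.
  apply/existsP; apply: contraNT nexy; rewrite negb_exists => /forallP ge_xy.
  apply/eqP/psumn_inj => k lekm; apply/eqP; rewrite eqn_leq dom_psumn //=.
  by have := ge_xy (Ordinal (lekm : k < m.+1)); rewrite -leqNgt.
rewrite /rank (bigD1 i) //= [X in _ < X](bigD1 i) //= -addSn.
by rewrite leq_add //; apply: leq_sum => j _; exact: dom_psumn.
Qed.

Lemma hdist_le_dom x y : dom x y -> hdist_le x y (rank y - rank x).
Proof.
move=> le_xy.
have [p [walk lastp sizep]] := cover_path dom_refl dom_trans rank_lt le_xy.
by exists p; split => //; apply: sub_path walk => a b cov; rewrite /hadj [covers _ _]cov.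
Qed.

End PartialSums.

Lemma unit_step_crossing (f g : nat -> nat) a c :
  (forall k, f k <= f k.+1 <= (f k).+1) -> (forall k, g k <= g k.+1 <= (g k).+1) ->
  a < c -> g a < f a -> f c < g c -> exists2 z, a < z < c & f z = g z.
Proof.
move=> stepf stepg ltac ltga ltfc.
pose reached k := (a < k) && (f k <= g k).
have reached_c : reached c by rewrite /reached ltac ltnW.
case: (@ex_minnP reached (ex_intro reached c reached_c)) => z /andP [ltaz lefgz] zmin.
have ltgf : g z.-1 < f z.-1.
  have [ltaz1|leza] := ltnP a z.-1; last by have -> : z.-1 = a by lia.
  rewrite ltnNge; apply/negP => lefg.
  by have := zmin z.-1; rewrite /reached ltaz1 lefg => /(_ isT); lia.
have lezc := zmin c reached_c.
have := stepf z.-1; have := stepg z.-1.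
rewrite prednK ?(leq_ltn_trans _ ltaz) // => stepgz stepfz.
have eqz : f z = g z by lia.
exists z => //; rewrite ltaz ltn_neqAle lezc andbT.
by apply: contraTneq ltfc => <-; rewrite eqz ltnn.
Qed.

Section Meet.
Variables n m : nat.
Implicit Types u v : elt n m.

(* Bit j is set exactly where the pointwise minimum of the partial sums
   increases. *)
Definition meet u v : elt n m :=
  (if u.1 <= v.1 then u.1 else v.1,
   [ffun j : 'I_m => minn (psumn u j.+1) (psumn v j.+1) != minn (psumn u j) (psumn v j)]).

Lemma psumn_meet u v k : psumn (meet u v) k = minn (psumn u k) (psumn v k).
Proof.
elim: k => [|k IH]; first by rewrite !psumn0 /=; case: leqP; lia.
rewrite psumnS IH; have [ltkm|lemk] := ltnP k m; last by rewrite !psumnS !bitn_out ?addn0.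
have := psumn_step u k; have := psumn_step v k.
rewrite -[k]/(val (Ordinal ltkm)) bitn_ord ffunE /=.
by case: eqP => /=; lia.
Qed.

Lemma dom_meetl u v : dom (meet u v) u.
Proof. by apply/forallP => i; rewrite !psum_psumn psumn_meet geq_minl. Qed.

Lemma dom_meetr u v : dom (meet u v) v.
Proof. by apply/forallP => i; rewrite !psum_psumn psumn_meet geq_minr. Qed.

Lemma incomparable_crossing u v :
  incomparable u v -> exists2 z, 0 < z < m & psumn u z = psumn v z.
Proof.
case/andP=> /ndom_psumn [a leam ltvua] /ndom_psumn [c lecm ltuvc].
have [ltac|ltca|eqac] := ltngtP a c.
- have [z /andP [ltaz ltzc] eqz] :=
    unit_step_crossing (psumn_step u) (psumn_step v) ltac ltvua ltuvc.
  by exists z; first lia.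
- have [z /andP [ltcz ltza] eqz] :=
    unit_step_crossing (psumn_step v) (psumn_step u) ltca ltuvc ltvua.
  by exists z; first lia.
- by move: ltvua ltuvc; rewrite eqac; lia.
Qed.

(* Termwise |s_u(i) - s_v(i)| <= |i - z|: both sequences move by at most one
   per step and agree at z. *)
Lemma rank_sub_meet_le u v z : psumn u z = psumn v z ->
  rank u - rank (meet u v) + (rank v - rank (meet u v))
    <= \sum_(i < m.+1) ((i - z) + (z - i)).
Proof.
move=> eqz; rewrite -!sumnB -?big_split /=; last 2 first.
- by move=> i _; rewrite psumn_meet geq_minr.
- by move=> i _; rewrite psumn_meet geq_minl.
apply: leq_sum => i _; rewrite psumn_meet.
have [leiz|ltzi] := leqP i z.
  by have := psumn_lipschitz u leiz; have := psumn_lipschitz v leiz; lia.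
by have := psumn_lipschitz u (ltnW ltzi); have := psumn_lipschitz v (ltnW ltzi); lia.
Qed.

End Meet.

Lemma sum_dist_bin2 z k : z <= k ->
  \sum_(i < k.+1) ((i - z) + (z - i)) = 'C(z.+1, 2) + 'C((k - z).+1, 2).
Proof.
move=> lezk; rewrite -(big_mkord xpredT (fun i => (i - z) + (z - i))).
rewrite (@big_cat_nat _ _ _ z) ?leqW //=.
congr (_ + _).
  rewrite big_nat_rev -bin2_sum big_nat_recl //=.
  by apply: eq_big_nat => i /andP [_ ltiz]; lia.
rewrite -{1}[z]add0n big_addn -bin2_sum subSn //.
by apply: eq_big_nat => i /andP [_ lti]; lia.
Qed.

Lemma double_bin2 k : 2 * 'C(k, 2) = k * k.-1.
Proof. by elim: k => // k IH; rewrite binS bin1 mulnDr IH; case: k {IH}; nia. Qed.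

Lemma bin2_split_le z k : 0 < z < k -> 'C(z.+1, 2) + 'C((k - z).+1, 2) <= 1 + 'C(k, 2).
Proof.
case/andP=> gt0z ltzk; have [t ->] : exists t, k = z + t.+1 by exists (k - z).-1; lia.
rewrite addKn -(leq_pmul2l (isT : 0 < 2)).
have := double_bin2 z.+1; have := double_bin2 t.+2; have := double_bin2 (z + t.+1).
have : t <= z * t by rewrite leq_pmull.
rewrite /= addnS /= !(mulSn, mulnS, mulnDl, mulnDr) (mulnC t z).
lia.
Qed.

Theorem lemma5p6 (n m : nat) (u v : elt n m) :
  2 <= m -> m <= n -> incomparable u v -> hdist_le u v (1 + 'C(m, 2)).
Proof.
move=> _ _ incuv.
have [z zbounds eqz] := incomparable_crossing incuv.
have walk := hdist_le_trans (hdist_le_sym (hdist_le_dom (dom_meetl u v)))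
                            (hdist_le_dom (dom_meetr u v)).
apply: hdist_leW walk _; apply: leq_trans (rank_sub_meet_le eqz) _.
rewrite sum_dist_bin2; first exact: bin2_split_le zbounds.
by case/andP: zbounds => _ /ltnW.
Qed.
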